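(* For every $n\geqslant 2$, the monoid $\mathcal{AO}_n$ has rank $n$, i.e. the minimum size of a generating set of $\mathcal{AO}_n$ (as a monoid) is $n$.
   Context: Let $\Omega_n=\{1<2<\cdots<n\}$ and $\mathcal{I}_n$ the monoid of all partial injective maps of $\Omega_n$. $\mathcal{AI}_n$ is the set of all $\alpha\in\mathcal{I}_n$ with $\alpha=\sigma|_{\mathrm{Dom}(\alpha)}$ for some even permutation $\sigma$ of $\Omega_n$; $\mathcal{POI}_n$ is the set of order-preserving elements of $\mathcal{I}_n$ and $\mathcal{AO}_n=\mathcal{AI}_n\cap\mathcal{POI}_n$. *)

(* Omega_n = {1<...<n} is modelled by 'I_n = {0<...<n-1}
   (order-isomorphic relabelling). *)
From mathcomp Require Import all_boot all_order all_fingroup.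
Set Implicit Arguments. Unset Strict Implicit. Unset Printing Implicit Defensive.

Definition ptrans (n : nat) := {ffun 'I_n -> option 'I_n}.

Definition is_pinj n (a : ptrans n) : bool :=
  [forall x, forall y, (a x != None) && (a x == a y) ==> (x == y)].

Definition in_AI n (a : ptrans n) : bool :=
  is_pinj a &&
  [exists s : {perm 'I_n}, ~~ odd_perm s &&
     [forall x, (a x != None) ==> (a x == Some (s x))]].

Definition in_POI n (a : ptrans n) : bool :=
  is_pinj a &&
  [forall x, forall y, forall u, forall v,
     [&& a x == Some u, a y == Some v & x < y] ==> (u < v)].

Definition in_AO n (a : ptrans n) : bool := in_AI a && in_POI a.

(* monoid structure of I_n: identity and composition (a first, then b) *)
Definition pid n : ptrans n := [ffun x => Some x].
Definition pcomp n (a b : ptrans n) : ptrans n :=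
  [ffun x => if a x is Some y then b y else None].

Definition generated n (A : {set ptrans n}) (a : ptrans n) : Prop :=
  exists s : seq (ptrans n), all (fun g => g \in A) s /\ a = foldr (@pcomp n) (pid n) s.

Definition generates_AO n (A : {set ptrans n}) : Prop :=
  (forall g, g \in A -> in_AO g) /\ (forall a, in_AO a -> generated A a).

(* Label the points 0, ..., n-1.  For points p, u let alpha p u be the
   order-preserving bijection from Ω∖{p} onto Ω∖{u}.  It is the restriction
   of a permutation of parity p + u, so it lies in AO_n exactly when
   p ≡ u (mod 2), and alpha p w ; alpha w u = alpha p u.  Chaining the
   generators alpha i (i+2) upwards and the two generators alpha i (i mod 2)
   (i = n-2, n-1) back down yields every alpha p u with p ≡ u, i.e. every
   element of AO_n of rank n-1.
   An order-preserving partial injection with at least two holes is reduced to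
   a partial identity (a product of the alpha i i) by factoring off maps
   alpha h j that lift a hole h of its domain, or of its image, above one of
   its points; the spare hole lets j be chosen with j ≡ h, and the sum of the
   points of domain and image strictly decreases.
   Conversely, the elements of AO_n of full rank are the identity, so any
   factorisation of the partial identity on Ω∖{i} over a generating set
   contains a generator with domain Ω∖{i}: there are at least n of them. *)

From Pilot Require Import Defs.
From mathcomp Require Import all_boot all_order all_fingroup.
From mathcomp Require Import zify.
(* ssrfun also defines a [pcomp]; composition of partial transformations must win. *)
Import Defs.
Set Implicit Arguments. Unset Strict Implicit. Unset Printing Implicit Defensive.

Lemma odd_leq (i : nat) : odd i <= i.
Proof. by case: i => [|i] //=; case: (odd i). Qed.

Section PartialTransformations.

Variable n : nat.
Implicit Types (a b c g : ptrans n) (D : {set 'I_n}) (G : {set ptrans n}).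

Lemma ptransP a b : (forall x, a x = b x) -> a = b.
Proof. by move=> ab; apply/ffunP. Qed.

Lemma pcompA a b c : pcomp (pcomp a b) c = pcomp a (pcomp b c).
Proof. by apply: ptransP => x; rewrite !ffunE; case: (a x) => //= y; rewrite ffunE. Qed.

Lemma pcomp1p a : pcomp (pid n) a = a.
Proof. by apply: ptransP => x; rewrite !ffunE. Qed.

Lemma pcompp1 a : pcomp a (pid n) = a.
Proof. by apply: ptransP => x; rewrite !ffunE; case: (a x) => // y; rewrite ffunE. Qed.

Definition pdom a : {set 'I_n} := [set x | a x != None].
Definition pimg a : {set 'I_n} := [set y | [exists x, a x == Some y]].

Lemma pimgP a y : reflect (exists x, a x = Some y) (y \in pimg a).
Proof. by rewrite inE; apply: (iffP existsP) => -[x /eqP]; exists x. Qed.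

Lemma pdom_pcomp_sub a b : pdom (pcomp a b) \subset pdom a.
Proof. by apply/subsetP => x; rewrite !inE ffunE; case: (a x). Qed.

Definition pmono a :=
  forall x y u v, a x = Some u -> a y = Some v -> x < y -> u < v.

Lemma pmono_inj a x y z : pmono a -> a x = Some z -> a y = Some z -> x = y.
Proof.
move=> mono ax ay.
by case: (ltngtP x y) => [/(mono _ _ _ _ ax ay)|/(mono _ _ _ _ ay ax)|/val_inj //];
  rewrite ltnn.
Qed.

Lemma POIP a : reflect (pmono a) (in_POI a).
Proof.
apply: (iffP andP) => [[_ /forallP mono] x y u v ax ay xy | mono].
  have /forallP/(_ y)/forallP/(_ u)/forallP/(_ v)/implyP := mono x.
  by apply; rewrite ax ay xy !eqxx.
split.
  apply/forallP => x; apply/forallP => y; apply/implyP => /andP[].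
  case ax: (a x) => [u|] // _ /eqP/esym ay.
  exact/eqP/(pmono_inj mono ax ay).
do 4 apply/forallP => ?; apply/implyP => /and3P[/eqP ax /eqP ay].
exact: mono ax ay.
Qed.

Lemma POI_inj a x y z : in_POI a -> a x = Some z -> a y = Some z -> x = y.
Proof. by move=> /POIP; apply: pmono_inj. Qed.

Lemma POI_comp a b : in_POI a -> in_POI b -> in_POI (pcomp a b).
Proof.
move=> /POIP mono_a /POIP mono_b; apply/POIP => x y u v; rewrite !ffunE.
case ax: (a x) => [x'|] //; case ay: (a y) => [y'|] // bx' by' xy.
exact: mono_b bx' by' (mono_a _ _ _ _ ax ay xy).
Qed.

Lemma AO_POI a : in_AO a -> in_POI a.
Proof. by case/andP. Qed.

Lemma card_pimg a : in_POI a -> #|pimg a| = #|pdom a|.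
Proof.
move=> POIa; pose f x := odflt x (a x).
have -> : pimg a = f @: pdom a.
  apply/setP => y; apply/pimgP/imsetP => [[x ax]|[x]].
    by exists x; rewrite ?inE ?ax // /f ax.
  by rewrite inE /f; case ax: (a x) => [u|] // _ ->; exists x.
apply: card_in_imset => x y; rewrite !inE /f.
case ax: (a x) => [u|] //; case ay: (a y) => [v|] // _ _ /= uv.
by apply: POI_inj ax _ => //; rewrite ay uv.
Qed.

Lemma POI_eq a b : in_POI a -> in_POI b ->
  pdom a = pdom b -> pimg a = pimg b -> a = b.
Proof.
have not_lt a' b' (x u v : 'I_n) : in_POI a' -> in_POI b' -> pimg a' = pimg b' ->
    (forall y : 'I_n, y < x -> a' y = b' y) -> a' x = Some u -> b' x = Some v -> ~ u < v.
  (* [u] is also a value of [b'], taken before [x] by monotonicity, where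
     [a'] and [b'] agree: this contradicts injectivity of [a']. *)
  move=> POIa' /POIP mono_b' img_eq below ax bx uv.
  have /pimgP[w bw] : u \in pimg b' by rewrite -img_eq; apply/pimgP; exists x.
  case: (ltngtP w x) => [wx|xw|/val_inj wx].
  - have aw : a' w = Some u by rewrite below.
    by move: wx; rewrite (POI_inj POIa' ax aw) ltnn.
  - by have := ltn_trans uv (mono_b' _ _ _ _ bx bw xw); rewrite ltnn.
  - by move: bw uv; rewrite wx bx => -[->]; rewrite ltnn.
move=> POIa POIb dom_eq img_eq; apply: ptransP => x.
have [k] := ubnP (val x); elim: k x => // k IH x; rewrite ltnS => xk.
have below (y : 'I_n) : y < x -> a y = b y.
  by move=> yx; apply: IH; apply: leq_trans yx xk.
have := congr1 (fun D => x \in D) dom_eq; rewrite !inE.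
case ax: (a x) => [u|]; case bx: (b x) => [v|] // _.
case: (ltngtP u v) => [uv|vu|/val_inj -> //]; exfalso.
  exact: (not_lt a b x u v POIa POIb img_eq below).
apply: (not_lt b a x v u POIb POIa (esym img_eq)) bx ax vu.
by move=> y /below ->.
Qed.

Definition pid_on D : ptrans n := [ffun x => if x \in D then Some x else None].

Lemma pid_onT : pid_on setT = pid n.
Proof. by apply: ptransP => x; rewrite !ffunE inE. Qed.

Lemma pdom_pid_on D : pdom (pid_on D) = D.
Proof. by apply/setP => x; rewrite !inE ffunE; case: (x \in D). Qed.

Lemma pimg_pid_on D : pimg (pid_on D) = D.
Proof.
apply/setP => y; apply/pimgP/idP => [[x]|yD]; last by exists y; rewrite ffunE yD.
by rewrite ffunE; case: ifP => // xD [<-].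
Qed.

Lemma POI_pid_on D : in_POI (pid_on D).
Proof.
by apply/POIP => x y u v; rewrite !ffunE; case: ifP => // _ [<-]; case: ifP => // _ [<-].
Qed.

Lemma AO_pid_on D : in_AO (pid_on D).
Proof.
rewrite /in_AO POI_pid_on andbT /in_AI (andP (POI_pid_on D)).1 /=.
apply/existsP; exists 1%g; rewrite odd_perm1 /=.
by apply/forallP => x; rewrite !ffunE perm1; case: ifP; rewrite ?eqxx.
Qed.

Lemma POI_pid_onE a : in_POI a -> pdom a = pimg a -> a = pid_on (pdom a).
Proof.
move=> POIa dom_img.
by apply: POI_eq; rewrite ?POI_pid_on ?pdom_pid_on ?pimg_pid_on.
Qed.

Lemma POI_total a : in_POI a -> pdom a = setT -> a = pid n.
Proof.
move=> POIa domT; rewrite -pid_onT -domT; apply: POI_pid_onE => //.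
by apply/esym/eqP; rewrite domT eqEcard subsetT card_pimg // domT leqnn.
Qed.

Definition down_closed D := [forall x in D, forall y : 'I_n, (y < x) ==> (y \in D)].

Lemma down_closedP D :
  reflect (forall x y : 'I_n, x \in D -> y < x -> y \in D) (down_closed D).
Proof.
apply: (iffP forall_inP) => [closed x y /closed/forallP/(_ y)/implyP //|closed x xD].
by apply/forallP => y; apply/implyP; apply: closed.
Qed.

Lemma down_closed_eq D1 D2 :
  down_closed D1 -> down_closed D2 -> #|D1| = #|D2| -> D1 = D2.
Proof.
move=> /down_closedP closed1 /down_closedP closed2 card12.
have [sub12|/subsetPn[x x1 x2]] := boolP (D1 \subset D2).
  by apply/eqP; rewrite eqEcard sub12 card12 leqnn.
have [sub21|/subsetPn[y y2 y1]] := boolP (D2 \subset D1).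
  by apply/esym/eqP; rewrite eqEcard sub21 card12 leqnn.
case: (ltngtP x y) => [xy|yx|/val_inj xy].
- by rewrite (closed2 _ _ y2 xy) in x2.
- by rewrite (closed1 _ _ x1 yx) in y1.
- by rewrite xy y2 in x2.
Qed.

Lemma generated_id G : generated G (pid n).
Proof. by exists [::]. Qed.

Lemma generated_mem G g : g \in G -> generated G g.
Proof. by move=> gG; exists [:: g]; rewrite /= gG pcompp1. Qed.

Lemma generated_comp G a b :
  generated G a -> generated G b -> generated G (pcomp a b).
Proof.
move=> [s [sG ->]] [t [tG ->]]; exists (s ++ t); rewrite all_cat sG tG.
by split=> //; elim: s {sG} => /= [|g s <-]; rewrite ?pcomp1p ?pcompA.
Qed.

Lemma pid_onI D1 D2 : pcomp (pid_on D1) (pid_on D2) = pid_on (D1 :&: D2).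
Proof.
apply: ptransP => x; rewrite !ffunE inE.
by case: (x \in D1) => //=; rewrite ffunE.
Qed.

Lemma generated_pid_on G D :
  (forall x, x \notin D -> generated G (pid_on [set~ x])) -> generated G (pid_on D).
Proof.
move=> gen1; have -> : D = [set x | x \notin enum (~: D)].
  by apply/setP => x; rewrite !inE mem_enum inE negbK.
have : {subset enum (~: D) <= ~: D} by move=> x; rewrite mem_enum.
elim: (enum (~: D)) => [|x s IH] sD.
  have -> : [set y | y \notin [::]] = [set: 'I_n] by apply/setP => y; rewrite !inE.
  by rewrite pid_onT; apply: generated_id.
have -> : [set y | y \notin x :: s] = [set~ x] :&: [set y | y \notin s].
  by apply/setP => y; rewrite !inE negb_or.
rewrite -pid_onI; apply: generated_comp.
  by apply: gen1; rewrite -in_setC sD // mem_head.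
by apply: IH => y ys; apply: sD; rewrite inE ys orbT.
Qed.

Lemma AO_factor_corank1 G s i : (forall g, g \in G -> in_AO g) -> all (mem G) s ->
  pdom (foldr (@pcomp n) (pid n) s) = [set~ i] -> exists2 g, g \in G & pdom g = [set~ i].
Proof.
move=> GAO; elim: s => [|g s IH] /=.
  by move=> _ /(congr1 (fun D => i \in D)); rewrite -pid_onT pdom_pid_on !inE eqxx.
case/andP => gG sG dom_gs; have dom_g := pdom_pcomp_sub g (foldr (@pcomp n) (pid n) s).
rewrite dom_gs in dom_g.
have [ig|ig] := boolP (i \in pdom g); last first.
  exists g => //; apply/eqP; rewrite eq_sym eqEsubset dom_g /=.
  by apply/subsetP => x xg; rewrite !inE; apply: contraNneq ig => <-.
have domT : pdom g = setT.
  apply/setP => x; rewrite in_setT; have [->//|xi] := eqVneq x i.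
  by apply: (subsetP dom_g); rewrite !inE.
by rewrite (POI_total (AO_POI (GAO g gG)) domT) pcomp1p in dom_gs; apply: IH.
Qed.

Lemma generates_AO_card_ge G : generates_AO G -> n <= #|G|.
Proof.
move=> [GAO gen]; pose holes := [set [set~ i] | i : 'I_n].
have card_holes : #|holes| = n.
  by rewrite card_imset ?card_ord // => i j /setC_inj/set1_inj.
have : holes \subset pdom @: G.
  apply/subsetP => _ /imsetP[i _ ->].
  have [s [sG es]] := gen _ (AO_pid_on [set~ i]).
  have [|g gG dom_g] := AO_factor_corank1 GAO sG (i := i); first by rewrite -es pdom_pid_on.
  by rewrite -dom_g imset_f.
by move/subset_leq_card; rewrite card_holes => /leq_trans; apply; apply: leq_imset_card.
Qed.

End PartialTransformations.

Section Alpha.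

Variable n : nat.
Implicit Types (i p u w t h d j x y : 'I_n.+1) (a b : ptrans n.+1) (S : {set 'I_n.+1}).

Lemma ltn_lift h (k l : 'I_n) : (lift h k < lift h l) = (k < l).
Proof. by rewrite !ltnNge leq_bump2. Qed.

Lemma lift_perm_mono p u x y : x != p -> y != p ->
  (lift_perm p u 1 x < lift_perm p u 1 y) = (x < y).
Proof.
case: (unliftP p x) => [k ->|->]; last by rewrite eqxx.
case: (unliftP p y) => [l ->|->]; last by rewrite eqxx.
by rewrite !lift_perm_lift !perm1 !ltn_lift.
Qed.

Lemma lift_perm_le h j x : h <= j -> x != h -> lift_perm h j 1 x <= x.
Proof.
case: (unliftP h x) => [k ->|->]; last by rewrite eqxx.
by rewrite lift_perm_lift perm1 /= /bump => hj _; case: leqP; case: leqP => //=; lia.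
Qed.

Lemma lift_perm_lt h j x : h < x -> x <= j -> lift_perm h j 1 x < x.
Proof.
case: (unliftP h x) => [k ->|->]; last by rewrite ltnn.
by rewrite lift_perm_lift perm1 /= /bump; case: leqP; case: leqP => //=; lia.
Qed.

Lemma sum_lift_perm_lt S h j d : h \notin S -> d \in S -> h < d -> d <= j ->
  \sum_(x in lift_perm h j 1 @: S) (x : nat) < \sum_(x in S) (x : nat).
Proof.
move=> hS dS hd dj; rewrite big_imset /=; last by move=> x y _ _ /perm_inj.
rewrite (bigD1 d) //= [X in _ < X](bigD1 d) //= -addSn.
apply: leq_add; first exact: lift_perm_lt.
apply: leq_sum => x /andP[xS _]; apply: lift_perm_le; first by lia.
by apply: contraNneq hS => <-.
Qed.

Definition alpha p u : ptrans n.+1 :=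
  [ffun x => if x == p then None else Some (lift_perm p u 1 x)].

Lemma alphaE p u x : x != p -> alpha p u x = Some (lift_perm p u 1 x).
Proof. by move=> /negbTE xp; rewrite ffunE xp. Qed.

Lemma pdom_alpha p u : pdom (alpha p u) = [set~ p].
Proof. by apply/setP => x; rewrite !inE ffunE; case: (x =P p). Qed.

Lemma pimg_alpha p u : pimg (alpha p u) = [set~ u].
Proof.
apply/setP => y; rewrite in_setC1; apply/pimgP/idP => [[x]|yu].
  rewrite ffunE; case: (x =P p) => // /eqP xp [<-].
  by rewrite -[X in _ != X](lift_perm_id p u 1) (inj_eq perm_inj).
exists ((lift_perm p u 1)^-1 y)%g; rewrite alphaE ?permKV //.
by rewrite -(inj_eq (@perm_inj _ (lift_perm p u 1))) permKV lift_perm_id.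
Qed.

Lemma alpha_POI p u : in_POI (alpha p u).
Proof.
apply/POIP => x y v v'; rewrite !ffunE.
case: (x =P p) => // /eqP xp [<-]; case: (y =P p) => // /eqP yp [<-].
by rewrite lift_perm_mono.
Qed.

Lemma alpha_comp p w u : pcomp (alpha p w) (alpha w u) = alpha p u.
Proof.
apply: ptransP => x; rewrite !ffunE; case: (x =P p) => // /eqP xp.
rewrite ffunE -[X in _ == X](lift_perm_id p w 1) (inj_eq perm_inj) (negbTE xp).
by rewrite -permM lift_permM mulg1.
Qed.

Lemma alpha_id p : alpha p p = pid_on [set~ p].
Proof. by apply: ptransP => x; rewrite !ffunE !inE lift_perm1 perm1; case: (x =P p). Qed.

Lemma AO_alpha p u : in_AO (alpha p u) = (odd p == odd u).
Proof.
rewrite /in_AO alpha_POI andbT /in_AI (andP (alpha_POI p u)).1 /=.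
apply/existsP/eqP => [[s /andP[even_s /forallP ext]]|odd_pu]; last first.
  exists (lift_perm p u 1); rewrite odd_lift_perm odd_perm1 odd_pu addbb /=.
  by apply/forallP => x; rewrite ffunE; case: (x =P p); rewrite ?eqxx.
have agree x : x != p -> s x = lift_perm p u 1 x.
  by move=> xp; move/implyP: (ext x); rewrite alphaE // => /(_ isT)/eqP[].
have s_eq : s = lift_perm p u 1.
  apply/permP => x; have [->|/agree //] := eqVneq x p.
  have [yp|yp] := eqVneq ((lift_perm p u 1)^-1 (s p))%g p.
    by apply: (@perm_inj _ (lift_perm p u 1)^-1); rewrite permK.
  by move: (agree _ yp); rewrite permKV => /perm_inj eq_p; rewrite eq_p eqxx in yp.
by move: even_s; rewrite s_eq odd_lift_perm odd_perm1 addbF; case: (odd p); case: (odd u).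
Qed.

Lemma POI_corank1 a p : in_POI a -> pdom a = [set~ p] -> exists u, a = alpha p u.
Proof.
move=> POIa dom_a.
have /cards1P[u img_u] : #|~: pimg a| == 1.
  apply/eqP/(@addnI #|pimg a|); rewrite cardsC card_pimg // dom_a cardsC1 card_ord.
  by rewrite addn1.
exists u; apply: POI_eq; rewrite ?alpha_POI ?pdom_alpha ?pimg_alpha //.
by rewrite -[pimg a]setCK img_u.
Qed.

Lemma alpha_pcomp_hole h j b : b h = None ->
  pcomp (alpha j h) b = [ffun x => b (lift_perm j h 1 x)].
Proof.
move=> bh; apply: ptransP => x; rewrite !ffunE.
by case: (x =P j) => [->|]; rewrite ?lift_perm_id.
Qed.

Lemma pdom_alpha_pcomp h j b : b h = None ->
  pdom (pcomp (alpha j h) b) = lift_perm h j 1 @: pdom b.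
Proof.
move=> bh; rewrite alpha_pcomp_hole // -preim_permV lift_permV invg1.
by apply/setP => x; rewrite !inE ffunE.
Qed.

Lemma pimg_alpha_pcomp h j b : b h = None -> pimg (pcomp (alpha j h) b) = pimg b.
Proof.
move=> bh; rewrite alpha_pcomp_hole //; apply/setP => y.
apply/pimgP/pimgP => [[x]|[x bx]]; rewrite ?ffunE; first by exists (lift_perm j h 1 x).
by exists ((lift_perm j h 1)^-1 x)%g; rewrite ffunE permKV.
Qed.

Lemma alpha_pcompK h j b : b h = None -> pcomp (alpha h j) (pcomp (alpha j h) b) = b.
Proof.
move=> bh; rewrite -pcompA alpha_comp alpha_id; apply: ptransP => x.
by rewrite !ffunE !inE; case: (x =P h) => [->|].
Qed.

Lemma pcomp_alpha_nonimg h j b : h \notin pimg b ->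
  pcomp b (alpha h j) = [ffun x => omap (lift_perm h j 1) (b x)].
Proof.
move=> hb; apply: ptransP => x; rewrite !ffunE; case bx: (b x) => [y|] //=.
rewrite alphaE //; apply: contraNneq hb => <-; apply/pimgP; by exists x.
Qed.

Lemma pdom_pcomp_alpha h j b : h \notin pimg b -> pdom (pcomp b (alpha h j)) = pdom b.
Proof.
move=> hb; rewrite pcomp_alpha_nonimg //.
by apply/setP => x; rewrite !inE ffunE; case: (b x).
Qed.

Lemma pimg_pcomp_alpha h j b : h \notin pimg b ->
  pimg (pcomp b (alpha h j)) = lift_perm h j 1 @: pimg b.
Proof.
move=> hb; rewrite pcomp_alpha_nonimg //; apply/setP => y.
apply/pimgP/imsetP => [[x]|[z /pimgP[x bx] ->]]; last by exists x; rewrite ffunE bx.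
by rewrite ffunE; case bx: (b x) => [z|] // [<-]; exists z => //; apply/pimgP; exists x.
Qed.

Lemma pcomp_alphaK h j b : h \notin pimg b -> pcomp (pcomp b (alpha h j)) (alpha j h) = b.
Proof.
move=> hb; rewrite pcompA alpha_comp alpha_id; apply: ptransP => x.
rewrite !ffunE; case bx: (b x) => [y|] //; rewrite ffunE in_setC1.
suff -> : y != h by [].
by apply: contraNneq hb => <-; apply/pimgP; exists x.
Qed.

(* The two missing points leave room to choose [j] of the parity of [h]. *)
Lemma parity_gap S : #|S| < n -> ~~ down_closed S ->
  exists h d j, [/\ h \notin S, d \in S, h < d, d <= j & odd h = odd j].
Proof.
move=> small /forall_inPn[x xS /forallPn[y]]; rewrite negb_imply => /andP[yx yS].
case: (@arg_minnP _ y (fun i => i \notin S) (@nat_of_ord _) yS) => h hS hmin.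
have hx : h < x := leq_ltn_trans (hmin _ yS) yx.
have xP : (x \in S) && (h < x) by rewrite xS hx.
case: (@arg_minnP _ x (fun i => (i \in S) && (h < i)) (@nat_of_ord _) xP).
move=> d /andP[dS hd] dmin.
have gap (i : 'I_n.+1) : h <= i -> i < d -> i \notin S.
  move=> hi id; apply: contraTN id => iS; rewrite -leqNgt; apply: dmin.
  by rewrite iS ltn_neqAle hi andbT; apply: contraNneq hS => /val_inj ->.
have [same|diff] := eqVneq (odd h) (odd d); first by exists h, d, d.
have [dn|nd] := ltnP d n.
  exists h, d, (inord d.+1); rewrite inordK //= leqnSn.
  by split=> //; move: diff; case: (odd h); case: (odd d).
have [h1d|dh1] := ltnP h.+1 d.
  have h1n : h.+1 < n.+1 by move: (ltn_ord d); lia.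
  exists (inord h.+1), d, d; rewrite inordK // leqnn; split=> //.
    by apply: gap; rewrite inordK ?leqnSn.
  by move: diff => /=; case: (odd h); case: (odd d).
have /card_gt1P[p [q [pS qS pq]]] : 1 < #|~: S|.
  by move: (cardsC S); rewrite card_ord; lia.
have only_h (i : 'I_n.+1) : i \in ~: S -> i = h.
  rewrite inE => iS; have hi := hmin _ iS; have ilt := ltn_ord i.
  have [di|id] := leqP d i; last by apply: ord_inj; lia.
  have di' : d = i by apply: ord_inj; lia.
  by rewrite -di' dS in iS.
by rewrite (only_h _ pS) (only_h _ qS) eqxx in pq.
Qed.

Definition AO_gen (i : 'I_n.+1) : ptrans n.+1 :=
  alpha i (inord (if i.+2 <= n then i.+2 else odd i)).

Definition AO_gens : {set ptrans n.+1} := [set AO_gen i | i : 'I_n.+1].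

Lemma AO_gens_AO g : g \in AO_gens -> in_AO g.
Proof.
case/imsetP => i _ ->; rewrite AO_alpha; case: ifP => top.
  by rewrite inordK //= negbK.
by rewrite inordK ?oddb //; apply: leq_ltn_trans (odd_leq i) (ltn_ord i).
Qed.

Lemma card_AO_gens : #|AO_gens| = n.+1.
Proof.
rewrite card_imset ?card_ord // => i k /(congr1 (@pdom _)).
by rewrite !pdom_alpha => /setC_inj/set1_inj.
Qed.

Lemma generated_AO_gen i : generated AO_gens (AO_gen i).
Proof. exact/generated_mem/imset_f. Qed.

Lemma AO_gen_step i j : j = i.+2 :> nat -> AO_gen i = alpha i j.
Proof.
move=> ji; rewrite /AO_gen -ji -ltnS ltn_ord; congr alpha.
by apply: val_inj; rewrite /= inordK.
Qed.

Lemma AO_gen_top i : n < i.+2 -> AO_gen i = alpha i (inord (odd i)).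
Proof. by rewrite /AO_gen ltnNge => /negbTE->. Qed.

Lemma generated_alpha_up i j : i < j -> odd i = odd j -> generated AO_gens (alpha i j).
Proof.
move=> ij odd_ij; have [k jk] : exists k, j = i + k.+1.*2 :> nat.
  exists ((j - i)./2.-1); move: (odd_double_half i) (odd_double_half j).
  rewrite odd_ij -!muln2; case: (odd j) => /=; lia.
clear ij odd_ij; elim: k j jk => [|k IH] j jk.
  rewrite -(AO_gen_step (i := i) (j := j)); first exact: generated_AO_gen.
  by rewrite jk; lia.
have wn : i + k.+1.*2 < n.+1 by move: (ltn_ord j); rewrite jk; lia.
rewrite -(alpha_comp i (inord (i + k.+1.*2))); apply: generated_comp.
  by apply: IH; rewrite inordK.
rewrite -(AO_gen_step (j := j)); first exact: generated_AO_gen.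
by rewrite inordK // jk; lia.
Qed.

Lemma parity_class_top p : exists t, [/\ p <= t, odd t = odd p & n < t.+2].
Proof.
have [same|diff] := eqVneq (odd n) (odd p).
  by exists ord_max; rewrite /= -ltnS ltn_ord same; split=> //; lia.
have n_pos : 0 < n.
  rewrite lt0n; apply: contraNneq diff => n0.
  have p0 : nat_of_ord p = 0 by move: (ltn_ord p) n0; lia.
  by rewrite p0 n0.
have pn : p != n :> nat by apply: contraNneq diff => ->.
have n1 : n.-1 < n.+1 by lia.
exists (inord n.-1); rewrite inordK //; split; first by move: (ltn_ord p) pn; lia.
  have odd_n : odd n = ~~ odd n.-1 by case: (n) n_pos.
  by move: diff; rewrite odd_n; case: (odd n.-1); case: (odd p).
by lia.
Qed.

Lemma generated_alpha p u : odd p = odd u -> generated AO_gens (alpha p u).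
Proof.
move=> odd_pu; have [t [pt odd_t top]] := parity_class_top p.
pose b : 'I_n.+1 := inord (odd p).
have bv : b = odd p :> nat.
  by rewrite inordK //; apply: leq_ltn_trans (odd_leq p) (ltn_ord p).
have gen_pb : generated AO_gens (alpha p b).
  have gen_tb : generated AO_gens (alpha t b).
    by rewrite /b -odd_t -AO_gen_top //; apply: generated_AO_gen.
  move: pt; rewrite leq_eqVlt => /orP[/eqP/ord_inj -> // | pt].
  rewrite -(alpha_comp p t b); apply: generated_comp => //.
  exact: generated_alpha_up.
have : b <= u by rewrite bv odd_pu odd_leq.
rewrite leq_eqVlt => /orP[/eqP/ord_inj <- // | bu].
rewrite -(alpha_comp p b u); apply: generated_comp => //.
by apply: generated_alpha_up; rewrite // bv oddb.
Qed.

Definition weight b := \sum_(x in pdom b) (x : nat) + \sum_(y in pimg b) (y : nat).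

Lemma generated_corank2 b : in_POI b -> #|pdom b| < n -> generated AO_gens b.
Proof.
have [k] := ubnP (weight b); elim: k b => // k IH b; rewrite ltnS => wk POIb small.
have [dom_closed|] := boolP (down_closed (pdom b)); last first.
  move=> /(parity_gap small)[h [d [j [hb db hd dj odd_hj]]]].
  have bh : b h = None by move: hb; rewrite inE negbK => /eqP.
  rewrite -(alpha_pcompK j bh); apply: generated_comp; first exact: generated_alpha.
  apply: IH; rewrite ?POI_comp ?alpha_POI //.
    apply: leq_trans wk; rewrite /weight pimg_alpha_pcomp // pdom_alpha_pcomp // ltn_add2r.
    exact: sum_lift_perm_lt hb db hd dj.
  by rewrite pdom_alpha_pcomp // card_imset //; apply: perm_inj.
have [img_closed|] := boolP (down_closed (pimg b)).
  rewrite (POI_pid_onE POIb); last by apply: down_closed_eq; rewrite ?card_pimg.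
  by apply: generated_pid_on => x _; rewrite -alpha_id; apply: generated_alpha.
move=> /(parity_gap _)[|h [d [j [hb db hd dj odd_hj]]]]; first by rewrite card_pimg.
rewrite -(pcomp_alphaK j hb); apply: generated_comp; last exact: generated_alpha.
apply: IH; rewrite ?POI_comp ?alpha_POI ?pdom_pcomp_alpha //.
apply: leq_trans wk; rewrite /weight pimg_pcomp_alpha // pdom_pcomp_alpha // ltn_add2l.
exact: sum_lift_perm_lt hb db hd dj.
Qed.

Lemma AO_generated a : in_AO a -> generated AO_gens a.
Proof.
move=> AOa; have POIa := AO_POI AOa.
case: (ltngtP #|pdom a| n) => [|full|corank1]; first exact: generated_corank2.
  rewrite (POI_total POIa); first exact: generated_id.
  by apply/eqP; rewrite eqEcard subsetT cardsT card_ord.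
have /cards1P[p hole] : #|~: pdom a| == 1.
  by apply/eqP/(@addnI #|pdom a|); rewrite cardsC card_ord corank1 addn1.
have dom_a : pdom a = [set~ p] by rewrite -[pdom a]setCK hole.
have [u a_eq] := POI_corank1 POIa dom_a.
by rewrite a_eq; apply: generated_alpha; apply/eqP; rewrite -AO_alpha -a_eq.
Qed.

End Alpha.

Theorem theorem4p8 (n : nat) (hn : 2 <= n) :
  (exists A : {set ptrans n}, generates_AO A /\ #|A| = n) /\
  (forall A : {set ptrans n}, generates_AO A -> n <= #|A|).
Proof.
split; last exact: generates_AO_card_ge.
case: n hn => // n _; exists (AO_gens n); split; last exact: card_AO_gens.
by split; [exact: AO_gens_AO | exact: AO_generated].
Qed.
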